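(* Let $X$ be a locally compact Hausdorff space, $Y\subseteq X$ a subset, and $\mathcal{F}=\{U\in\mathcal{O}(X):Y\subseteq U\}$. Then $\mathcal{F}$ is an m-filter which is 1-step over $\mathcal{O}(X)$, and for $U,V\in\mathcal{O}(X)$ we have $\overline U=\overline V$ in $\mathcal{O}(X)_\mathcal{F}$ if and only if $U\cap Y=V\cap Y$.
   Context: $\mathcal{O}(X)$ is the quantale of open subsets of $X$ (order inclusion, join union, multiplication intersection, top $X$); it is a module over itself. An m-filter is a subset containing $X$, upward closed and closed under intersection. For $\mathcal{F}$ an m-filter and $U,V\in\mathcal{O}(X)$: $U\preceq^1_\mathcal{F}V$ means there are open sets $U_i$ and $S_i\in\mathcal{F}$ ($i\in I$) with $U\subseteq\bigcup_iU_i$ and $S_i\cap U_i\subseteq V$; $U\preceq^n_\mathcal{F}V$ means a chain of $n$ such steps; $U\preceq_\mathcal{F}V$ means $U\preceq^n_\mathcal{F}V$ for some $n\ge1$. $\mathcal{O}(X)_\mathcal{F}$ is $\mathcal{O}(X)$ modulo $U\sim V\iff U\preceq_\mathcal{F}V\preceq_\mathcal{F}U$, with classes $\overline U$. $\mathcal{F}$ is 1-step over $\mathcal{O}(X)$ if $U\preceq_\mathcal{F}V$ implies $U\preceq^1_\mathcal{F}V$. *)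

From mathcomp Require Import all_boot all_order.
From mathcomp Require Import all_classical all_reals all_analysis.
Set Implicit Arguments. Unset Strict Implicit. Unset Printing Implicit Defensive.
Local Open Scope classical_set_scope.

Section Quantale.
Variable X : topologicalType.

(* A subset of O(X): a predicate on sets of X, required to consist of open sets. *)
(* m-filter: subset of O(X) containing X (top), upward closed in O(X),
   closed under intersection (the quantale multiplication). *)
Definition mfilter (F : set X -> Prop) : Prop :=
  (forall U, F U -> open U) /\
  F setT /\
  (forall U V, open U -> open V -> U `<=` V -> F U -> F V) /\
  (forall U V, F U -> F V -> F (U `&` V)).

Definition prec1 (F : set X -> Prop) (U V : set X) : Prop :=
  exists (I : Type) (Ui Si : I -> set X),
    (forall i, open (Ui i)) /\ (forall i, F (Si i)) /\
    U `<=` \bigcup_i Ui i /\ (forall i, Si i `&` Ui i `<=` V).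

(* U <=^n_F V : a chain of n steps through open sets (precn 0 is equality,
   only n >= 1 is used). *)
Fixpoint precn (F : set X -> Prop) (n : nat) (U V : set X) : Prop :=
  match n with
  | 0 => U = V
  | n'.+1 => exists W, open W /\ precn F n' U W /\ prec1 F W V
  end.

Definition prec (F : set X -> Prop) (U V : set X) : Prop :=
  exists n, (1 <= n)%N /\ precn F n U V.

(* the relation U ~ V defining O(X)_F; classes coincide iff related *)
Definition equivF (F : set X -> Prop) (U V : set X) : Prop :=
  prec F U V /\ prec F V U.

Definition one_step (F : set X -> Prop) : Prop :=
  forall U V, open U -> open V -> prec F U V -> prec1 F U V.

End Quantale.

(* In a locally compact Hausdorff space every point of an open set U has an
   open neighbourhood W with closure W inside U.  Covering U by such W_x and
   pairing each with the open set S_x := ~` closure W_x `|` V, which contains Y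
   as soon as U `&` Y `<=` V, gives U <=^1 V in one step.  Conversely every
   step of a chain only loses points outside Y, so U <=_F V forces
   U `&` Y `<=` V.  Hence the preorder is U `&` Y `<=` V and is reached in
   one step. *)
From mathcomp Require Import all_boot all_order.
From mathcomp Require Import all_classical all_reals all_analysis.
Set Implicit Arguments. Unset Strict Implicit. Unset Printing Implicit Defensive.
Local Open Scope classical_set_scope.

Section OpenSupsets.
Variables (X : topologicalType) (Y : set X).

Definition open_supsets : set X -> Prop := fun U => open U /\ Y `<=` U.

Lemma open_supsets_mfilter : mfilter open_supsets.
Proof.
split; first by move=> U [].
split; first by split => //; exact: openT.
split; first by move=> U V _ oV UV [_ YU]; split => //; exact: subset_trans YU UV.
move=> U V [oU YU] [oV YV]; split; first exact: openI.
by move=> y Yy; split; [exact: YU | exact: YV].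
Qed.

Lemma precn_open_supsets_subset n (U V : set X) :
  precn open_supsets n U V -> U `&` Y `<=` V.
Proof.
elim: n V => [|n IHn] V /=; first by move=> -> x [].
move=> [W [_ [UW [I [Ui [Si [_ [FS [cover SU]]]]]]]]] x [Ux Yx].
have [i _ Uix] := cover x (IHn W UW x (conj Ux Yx)).
by apply: (SU i); split => //; exact: (FS i).2.
Qed.

Lemma prec_open_supsets_subset (U V : set X) :
  prec open_supsets U V -> U `&` Y `<=` V.
Proof. by move=> [n [_]]; exact: precn_open_supsets_subset. Qed.

End OpenSupsets.

Lemma locally_compact_open_shrink (X : topologicalType) (U : set X) (x : X) :
  hausdorff_space X -> locally_compact [set: X] -> open U -> U x ->
  exists W : set X, [/\ open W, W x & closure W `<=` U].
Proof.
move=> hX lcX oU Ux.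
have [//|C Cx [cptC _]] := lcX x; rewrite withinET in Cx.
have [B Bx BU] := compact_regular hX cptC Cx (open_nbhs_nbhs (conj oU Ux)).
exists (interior B); split; [exact: open_interior | by [] |].
exact: subset_trans (closureS (@interior_subset _ _)) BU.
Qed.

Lemma prec1_open_supsets (X : topologicalType) (Y U V : set X) :
  hausdorff_space X -> locally_compact [set: X] -> open U -> open V ->
  U `&` Y `<=` V -> prec1 (open_supsets Y) U V.
Proof.
move=> hX lcX oU oV UYV.
have shrink (x : X) : exists W : set X, [/\ open W, U x -> W x & closure W `<=` U].
  have [Ux|nUx] := pselect (U x).
    by have [W [oW Wx WU]] := locally_compact_open_shrink hX lcX oU Ux; exists W.
  by exists set0; split => //; [exact: open0 | rewrite closure0].
have [W hW] := choice shrink.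
exists X, W, (fun x => ~` closure (W x) `|` V).
split; first by move=> x; have [] := hW x.
split.
  move=> x; have [_ _ WU] := hW x; split.
    by apply: openU => //; apply: closed_openC; exact: closed_closure.
  move=> y Yy; have [Wy|nWy] := pselect (closure (W x) y); last by left.
  by right; apply: UYV; split => //; exact: WU.
split; first by move=> x Ux; exists x => //; have [_ Wx _] := hW x; exact: Wx.
by move=> x y [[nWy|Vy] Wxy] //; exfalso; apply: nWy; exact: subset_closure.
Qed.

Lemma prec_open_supsets_of_subset (X : topologicalType) (Y U V : set X) :
  hausdorff_space X -> locally_compact [set: X] -> open U -> open V ->
  U `&` Y `<=` V -> prec (open_supsets Y) U V.
Proof.
move=> hX lcX oU oV UYV; exists 1%N; split => //=.
by exists U; split => //; split => //; exact: prec1_open_supsets.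
Qed.

Theorem mainTheorem16 (X : topologicalType) (Y : set X) :
  hausdorff_space X -> locally_compact [set: X] ->
  let F := fun U : set X => open U /\ Y `<=` U in
  mfilter F /\ one_step F /\
  (forall U V : set X, open U -> open V ->
     (equivF F U V <-> U `&` Y = V `&` Y)).
Proof.
move=> hX lcX; rewrite -/(open_supsets Y).
split; first exact: open_supsets_mfilter.
split.
  by move=> U V oU oV /prec_open_supsets_subset; exact: prec1_open_supsets.
move=> U V oU oV; split.
  move=> [/prec_open_supsets_subset UV /prec_open_supsets_subset VU].
  by apply/seteqP; split => x [? ?]; split => //; [exact: UV | exact: VU].
move=> UVY; split; apply: prec_open_supsets_of_subset => // x xY.
  by move: xY; rewrite UVY => -[].
by move: xY; rewrite -UVY => -[].
Qed.
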